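(* Let $\mathbb{K}\in\{\mathbb{R},\mathbb{C}\}$ and let $\mathcal{X}$ be a topological $\mathbb{K}$-vector space whose topological dual $\mathcal{X}^{\ast}$ separates the points of $\mathcal{X}$. Then $\mathbf{CF}(\mathcal{X}^{\ast})$, endowed with the (subspace topology of the) weak*-Hausdorff hypertopology, is a Hausdorff space.
   Context: Topological vector spaces are Hausdorff. $\mathcal{X}^{\ast}$ carries the weak* topology. $\mathbf{F}(\mathcal{X}^{\ast})$ is the set of nonempty weak*-closed subsets of $\mathcal{X}^{\ast}$ and $\mathbf{CF}(\mathcal{X}^{\ast})\subseteq\mathbf{F}(\mathcal{X}^{\ast})$ the subset of convex ones. The weak*-Hausdorff hypertopology on $\mathbf{F}(\mathcal{X}^{\ast})$ is the topology generated by the family of extended pseudometrics $d_H^{(A)}(F,\tilde F)=\max\{\sup_{\sigma\in F}\inf_{\tilde\sigma\in\tilde F}|(\sigma-\tilde\sigma)(A)|,\ \sup_{\tilde\sigma\in\tilde F}\inf_{\sigma\in F}|(\sigma-\tilde\sigma)(A)|\}\in[0,\infty]$, $A\in\mathcal{X}$. *)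

From HB Require Import structures.
From mathcomp Require Import all_boot all_order all_algebra.
From mathcomp Require Import all_classical all_reals all_analysis.
From mathcomp Require Export complex.
Set Implicit Arguments. Unset Strict Implicit. Unset Printing Implicit Defensive.
Import Order.TTheory GRing.Theory Num.Theory.
Import numFieldTopology.Exports numFieldNormedType.Exports.
Local Open Scope classical_set_scope.
Local Open Scope ring_scope.

Section HyperTopology.
(* R : the real numbers; K : the scalar field (R or C = R[i]);
   nK : the absolute value of K, valued in R. *)
Variables (R : realType) (K : numFieldType) (nK : K -> R).
Variable X : topologicalLmodType K.

Definition dual_elt (f : X -> K) : Prop :=
  (forall (a : K) (x y : X), f (a *: x + y) = a * f x + f y) /\ continuous f.

Definition dual_separates_points : Prop :=
  forall x y : X, x <> y -> exists f, dual_elt f /\ f x <> f y.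

Definition wstar_open (U : set (X -> K)) : Prop :=
  U `<=` dual_elt /\
  forall s, U s -> exists (xs : seq X) (e : R), 0 < e /\
    forall t, dual_elt t -> (forall x, x \in xs -> nK (t x - s x) < e) -> U t.

Definition wstar_closed (S : set (X -> K)) : Prop :=
  S `<=` dual_elt /\ wstar_open (dual_elt `\` S).

Definition Fset (S : set (X -> K)) : Prop := S !=set0 /\ wstar_closed S.

Definition convex_dual (S : set (X -> K)) : Prop :=
  forall s t, S s -> S t -> forall l : K, 0 <= l <= 1 ->
    S (fun x => l * s x + (1 - l) * t x).

Definition CFset (S : set (X -> K)) : Prop := Fset S /\ convex_dual S.

Definition dH (A : X) (F G : set (X -> K)) : \bar R :=
  Order.max
    (ereal_sup [set ereal_inf [set (nK (s A - t A))%:E | t in G] | s in F])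
    (ereal_sup [set ereal_inf [set (nK (s A - t A))%:E | s in F] | t in G]).

(* Open sets of the weak*-Hausdorff hypertopology on F(X^* ), i.e. the
   topology generated by the family (dH A)_{A in X}: every point has a
   finite intersection of dH-balls around it inside the set. *)
Definition hyp_open (U : set (set (X -> K))) : Prop :=
  U `<=` Fset /\
  forall F, U F -> exists (As : seq X) (e : R), 0 < e /\
    forall G, Fset G -> (forall A, A \in As -> (dH A F G < e%:E)%E) -> U G.

(* CF(X^* ) with the subspace topology of the hypertopology is Hausdorff:
   distinct points have relatively open neighbourhoods U :&: CF, V :&: CF
   which are disjoint. *)
Definition CF_hausdorff : Prop :=
  forall F G, CFset F -> CFset G -> F <> G ->
    exists U V, [/\ hyp_open U, hyp_open V, U F, V G &
      forall H, CFset H -> U H -> V H -> False].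

End HyperTopology.

From HB Require Import structures.
From mathcomp Require Import all_boot all_order all_algebra.
From mathcomp Require Import all_classical all_reals all_analysis.
From mathcomp Require Import complex.
From mathcomp Require Import lra ring.
Set Implicit Arguments. Unset Strict Implicit. Unset Printing Implicit Defensive.
Import Order.TTheory GRing.Theory Num.Theory.
Import numFieldTopology.Exports numFieldNormedType.Exports.
Local Open Scope ring_scope.

(* Let F <> G be closed convex sets of functionals, say s in F \ G.  Some basic
   weak* neighbourhood of s, given by finitely many points of X, misses G.
   Recording the real parts of t - s at these points and at their multiples by
   i maps G onto a convex subset of R^m bounded away from 0, which the point of
   minimal Euclidean norm of its closure separates from 0.  This yields A in X
   and d > 0 with Re s(A) + d <= Re t(A) for every t in G; then "some h in H has
   Re h(A) < Re s(A) + d/2" and "Re h(A) stays uniformly above Re s(A) + d/2 on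
   H" define disjoint d_H^(A)-open neighbourhoods of F and G. *)

Section FiniteDimSeparation.
Local Open Scope classical_set_scope.
Variables (R : realType) (m : nat).
Implicit Types (C : set 'rV[R]_m) (u v : 'rV[R]_m).

Definition dotrv u v := \sum_(i < m) u ord0 i * v ord0 i.
Definition sqnorm v := dotrv v v.

Lemma sqnorm_ge0 v : 0 <= sqnorm v.
Proof. by apply: sumr_ge0 => i _; rewrite -expr2 sqr_ge0. Qed.

Lemma sqr_coord_le_sqnorm v i : v ord0 i ^+ 2 <= sqnorm v.
Proof.
rewrite /sqnorm /dotrv (bigD1 i) //= -expr2 lerDl.
by apply: sumr_ge0 => j _; rewrite -expr2 sqr_ge0.
Qed.

Lemma sqnorm_continuous : continuous sqnorm.
Proof.
apply: continuous_big => [|i _]; first exact: add_continuous.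
by move=> v; apply: continuousM; exact: coord_continuous.
Qed.

Lemma sqnorm_combine (l : R) u v :
  sqnorm (l *: v + (1 - l) *: u) =
  sqnorm u - 2 * l * (sqnorm u - dotrv u v) + l ^+ 2 * sqnorm (v - u).
Proof.
rewrite /sqnorm /dotrv -sumrB !mulr_sumr -sumrB -big_split /=.
by apply: eq_bigr => i _; rewrite !mxE; ring.
Qed.

Lemma closure_ge (f : 'rV[R]_m -> R) (a : R) C :
  continuous f -> (forall c, C c -> a <= f c) ->
  forall v, closure C v -> a <= f v.
Proof.
move=> fc Cge; have : closed (f @^-1` [set x | a <= x]).
  by apply: preimage_closed => [x _|]; [exact: fc | exact: closed_ge].
move=> /closure_id fcl v Cv.
suff : (f @^-1` [set x | a <= x]) v by [].
by rewrite fcl; exact: closureS Cv.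
Qed.

Lemma exists_sqnorm_min C : C !=set0 ->
  exists2 p, closure C p & forall c, C c -> sqnorm p <= sqnorm c.
Proof.
move=> [c0 Cc0]; pose M := 1 + sqnorm c0.
pose S := closure C `&` [set v | sqnorm v <= sqnorm c0].
have S_closed : closed S.
  apply: closedI; first exact: closed_closure.
  apply: (@preimage_closed _ _ (@sqnorm) [set x | x <= sqnorm c0]).
    by move=> x _; exact: sqnorm_continuous.
  exact: closed_le.
have S_compact : compact S.
  have box_compact := @rV_compact R m (fun=> `[(- M), M]%classic)
    (fun=> @segment_compact _ _ _).
  apply: (subclosed_compact S_closed box_compact).
  move=> v [_ /= vle] i /=; rewrite in_itv /= -ler_norml.
  have : `|v ord0 i| <= 1 + v ord0 i ^+ 2.
    rewrite -real_normK ?num_real //; set y := `|_|.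
    by have := sqr_ge0 (y - 1); nra.
  move=> /le_trans; apply; rewrite lerD2l.
  exact: le_trans (sqr_coord_le_sqnorm v i) vle.
have S0 : S !=set0 by exists c0; split => //=; exact: subset_closure.
have [p /set_mem[Cp _] pmin] :=
  EVT_min_rV S0 S_compact (continuous_subspaceT sqnorm_continuous).
exists p => // c Cc; have [cle|clt] := leP (sqnorm c) (sqnorm c0).
  by apply: pmin; rewrite inE; split => //; exact: subset_closure.
apply/ltW/(le_lt_trans _ clt)/pmin; rewrite inE; split => //=.
exact: subset_closure.
Qed.

Definition rv_convex C :=
  forall c1 c2 (l : R), C c1 -> C c2 -> 0 <= l <= 1 ->
    C (l *: c1 + (1 - l) *: c2).

Lemma sqnorm_min_le_dotrv C p c : rv_convex C -> closure C p ->
  (forall x, C x -> sqnorm p <= sqnorm x) -> C c -> sqnorm p <= dotrv p c.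
Proof.
move=> Cconv Cp pmin Cc.
have quad l : 0 <= l <= 1 ->
    2 * l * (sqnorm p - dotrv p c) <= l ^+ 2 * sqnorm (c - p).
  move=> l01; suff : sqnorm p <= sqnorm (l *: c + (1 - l) *: p).
    by rewrite sqnorm_combine; lra.
  apply: (closure_ge (f := fun v => sqnorm (l *: c + (1 - l) *: v))) Cp.
    move=> v; apply: continuous_comp; last exact: sqnorm_continuous.
    by apply: continuousD; [exact: cst_continuous | exact: scaler_continuous].
  by move=> x Cx; apply: pmin; exact: Cconv.
rewrite leNgt; apply/negP; rewrite -subr_gt0.
set a := _ - _ => a_gt0; set D := sqnorm (c - p).
have aD_gt0 : 0 < a + D by apply: ltr_wpDr => //; exact: sqnorm_ge0.
(* l * (a + D) = a turns [quad l] into l * a * (1 + l) <= 0 *)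
pose l := a / (a + D).
have l_gt0 : 0 < l by exact: divr_gt0.
have l_le1 : l <= 1 by rewrite ler_pdivrMr // mul1r lerDl sqnorm_ge0.
have lD : l * (a + D) = a by rewrite /l divfK // gt_eqF.
have := quad l; rewrite ltW //= l_le1 -/a -/D => /(_ isT); nra.
Qed.

Lemma rv_convex_separation C (e : R) : 0 < e -> rv_convex C ->
  (forall c, C c -> exists i, e <= `|c ord0 i|) ->
  exists p (d : R), 0 < d /\ forall c, C c -> d <= dotrv p c.
Proof.
move=> e_gt0 Cconv Cfar.
have [C0|/set0P[c0 Cc0]] := eqVneq C set0.
  by exists 0, 1; split => // c; rewrite C0.
have [p Cp pmin] := exists_sqnorm_min (ex_intro _ c0 Cc0).
exists p, (e ^+ 2); split; first exact: exprn_gt0.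
move=> c Cc; apply: le_trans (sqnorm_min_le_dotrv Cconv Cp pmin Cc).
apply: (closure_ge sqnorm_continuous) Cp => x /Cfar[i ei].
apply: le_trans (sqr_coord_le_sqnorm x i).
rewrite -[x ord0 i ^+ 2]real_normK ?num_real //; set y := `|_| in ei *; nra.
Qed.

End FiniteDimSeparation.

Section DualFunctional.
Variables (K : numFieldType) (X : topologicalLmodType K) (t : X -> K).
Hypothesis t_dual : dual_elt t.

Lemma dual0 : t 0 = 0.
Proof.
have := t_dual.1 1 0 0; rewrite scaler0 addr0 mul1r.
by move=> /(congr1 (fun z => z - t 0)); rewrite /= subrr addrK.
Qed.

Lemma dualD x y : t (x + y) = t x + t y.
Proof. by have := t_dual.1 1 x y; rewrite scale1r mul1r. Qed.

Lemma dualZ a x : t (a *: x) = a * t x.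
Proof. by have := t_dual.1 a x 0; rewrite !addr0 dual0 addr0. Qed.

Lemma dual_sum n (c : 'I_n -> K) (y : 'I_n -> X) :
  t (\sum_(i < n) c i *: y i) = \sum_(i < n) c i * t (y i).
Proof.
rewrite (big_morph t dualD dual0); apply: eq_bigr => i _; exact: dualZ.
Qed.

End DualFunctional.

Section HyperDistance.
Variables (R : realType) (K : numFieldType) (nK : K -> R).
Variable X : topologicalLmodType K.
Implicit Types (F G : set (X -> K)) (A : X) (e : R).

Lemma dH_ltl A F G e s : (dH nK A F G < e%:E)%E -> F s ->
  exists2 t, G t & nK (s A - t A) < e.
Proof.
rewrite /dH gt_max => /andP[+ _] Fs.
move=> /(le_lt_trans (ereal_sup_ubound (imageP _ Fs))) /ereal_inf_lt.
by move=> [_ [t Gt <-]]; rewrite lte_fin; exists t.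
Qed.

Lemma dH_ltr A F G e t : (dH nK A F G < e%:E)%E -> G t ->
  exists2 s, F s & nK (s A - t A) < e.
Proof.
rewrite /dH gt_max => /andP[_ +] Gt.
move=> /(le_lt_trans (ereal_sup_ubound (imageP _ Gt))) /ereal_inf_lt.
by move=> [_ [s Fs <-]]; rewrite lte_fin; exists s.
Qed.

End HyperDistance.

Section RealPartSeparation.
Local Open Scope classical_set_scope.
Variables (R : realType) (K : numFieldType) (nK : K -> R).
(* [re] plays the role of the real part, [emb] of the inclusion of R into K
   and [j] of the imaginary unit ([j = 0] when [K = R]). *)
Variables (re : K -> R) (emb : R -> K) (j : K).
Hypothesis reD : {morph re : a b / a + b}.
Hypothesis re_embM : forall r z, re (emb r * z) = r * re z.
Hypothesis re_le_nK : forall z, re z <= nK z.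
Hypothesis nK_le_re : forall z, nK z <= `|re z| + `|re (j * z)|.
Hypothesis nKN : forall z, nK (- z) = nK z.
Hypothesis emb_itv01 : forall l, 0 <= l <= 1 -> 0 <= emb l <= 1.
Variable X : topologicalLmodType K.
Implicit Types (F G H : set (X -> K)) (s t : X -> K) (A : X).

Lemma re0 : re 0 = 0.
Proof. by have := reD 0 0; rewrite addr0 => h; lra. Qed.

Lemma reB a b : re (a - b) = re a - re b.
Proof. by apply/eqP; rewrite eq_sym subr_eq -reD subrK. Qed.

Lemma reB_le_nK a b : re a - re b <= nK (a - b).
Proof. by rewrite -reB. Qed.

Definition re_coords (ys : seq X) s t : 'rV[R]_(size ys) :=
  \row_i re (t (nth 0 ys i) - s (nth 0 ys i)).

Definition real_comb (ys : seq X) (p : 'rV[R]_(size ys)) : X :=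
  \sum_(i < size ys) emb (p ord0 i) *: nth 0 ys i.

Lemma re_coordsE ys s t y : y \in ys ->
  exists i, re_coords ys s t ord0 i = re (t y - s y).
Proof.
move=> y_in; have i_lt : (index y ys < size ys)%N by rewrite index_mem.
by exists (Ordinal i_lt); rewrite mxE nth_index.
Qed.

Lemma re_coords_convex ys s G :
  convex_dual G -> rv_convex (re_coords ys s @` G).
Proof.
move=> Gconv _ _ l [t1 Gt1 <-] [t2 Gt2 <-] l01.
exists (fun x => emb l * t1 x + (1 - emb l) * t2 x).
  exact: Gconv _ _ Gt1 Gt2 _ (emb_itv01 l01).
apply/rowP => i; rewrite !mxE; set y := nth 0 ys i.
rewrite (_ : _ - s y = emb l * (t1 y - s y) +
  ((t2 y - s y) - emb l * (t2 y - s y))); last by ring.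
by rewrite [LHS]reD [in LHS]reB !re_embM; ring.
Qed.

Lemma dotrv_re_coords ys s t p : dual_elt s -> dual_elt t ->
  dotrv p (re_coords ys s t) = re (t (real_comb p)) - re (s (real_comb p)).
Proof.
move=> s_dual t_dual; rewrite /real_comb !dual_sum // -reB -sumrB.
rewrite (big_morph re reD re0); apply: eq_bigr => i _.
by rewrite mxE -mulrBr re_embM.
Qed.

Lemma nK_le_re_coords ys s t x : dual_elt s -> dual_elt t ->
  x \in ys -> j *: x \in ys -> exists i1 i2,
  nK (t x - s x) <= `|re_coords ys s t ord0 i1| + `|re_coords ys s t ord0 i2|.
Proof.
move=> s_dual t_dual /(re_coordsE s t)[i1 e1] /(re_coordsE s t)[i2 e2].
by exists i1, i2; rewrite e1 e2 (dualZ s_dual) (dualZ t_dual) -mulrBr.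
Qed.

Lemma wstar_convex_separation G s :
  wstar_closed nK G -> convex_dual G -> dual_elt s -> ~ G s ->
  exists A (d : R), 0 < d /\ forall t, G t -> re (s A) + d <= re (t A).
Proof.
move=> [G_dual [_ G_open]] Gconv s_dual Gns.
have [xs [e [e_gt0 xs_nbhs]]] := G_open s (conj s_dual Gns).
pose ys := xs ++ map (fun x => j *: x) xs.
have far c : (re_coords ys s @` G) c -> exists i, e / 2 <= `|c ord0 i|.
  case=> t Gt <-; apply: contrapT => /forallNP near_s.
  have lt_e2 i : `|re_coords ys s t ord0 i| < e / 2.
    by rewrite ltNge; apply/negP; exact: near_s.
  suff : (@dual_elt _ X `\` G) t by case.
  apply: xs_nbhs (G_dual _ Gt) _ => x x_in.
  have [|//|i1 [i2 le_nK]] := @nK_le_re_coords ys s t x s_dual (G_dual _ Gt).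
  - by rewrite mem_cat x_in.
  - by rewrite mem_cat orbC map_f.
  by apply: (le_lt_trans le_nK); rewrite [e]splitr ltrD.
have e2_gt0 : 0 < e / 2 by rewrite divr_gt0.
have [p [d [d_gt0 sep]]] :=
  rv_convex_separation e2_gt0 (re_coords_convex (ys := ys) (s := s) Gconv) far.
exists (real_comb p), d; split => // t Gt.
have := sep _ (imageP _ Gt); rewrite dotrv_re_coords //; last exact: G_dual.
by rewrite lerBrDr addrC.
Qed.

Lemma hyp_open_exists_lt A (c : R) :
  hyp_open nK (fun H => Fset nK H /\ exists2 h, H h & re (h A) < c).
Proof.
split=> [H [] //|H [FH [h Hh hc]]].
exists [:: A], (c - re (h A)); split; first by rewrite subr_gt0.
move=> H' FH' /(_ A (mem_head _ _)) dH_lt; split=> //.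
have [h' H'h' h'_near] := dH_ltl dH_lt Hh.
exists h' => //; have := reB_le_nK (h' A) (h A).
by rewrite -nKN opprB; lra.
Qed.

Lemma hyp_open_forall_gt A (c : R) :
  hyp_open nK (fun H => Fset nK H /\
    exists2 b, c < b & forall h, H h -> b <= re (h A)).
Proof.
split=> [H [] //|H [FH [b cb Hb]]].
exists [:: A], ((b - c) / 2); split; first by rewrite divr_gt0 // subr_gt0.
move=> H' FH' /(_ A (mem_head _ _)) dH_lt; split=> //.
exists (b - (b - c) / 2); first lra.
move=> h' H'h'; have [h Hh h_near] := dH_ltr dH_lt H'h'.
by have := reB_le_nK (h A) (h' A); have := Hb h Hh; lra.
Qed.

Lemma hyp_open_separation F G s : Fset nK F -> Fset nK G -> convex_dual G ->
  F s -> ~ G s -> exists U V, [/\ hyp_open nK U, hyp_open nK V, U F, V G &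
    forall H, U H -> V H -> False].
Proof.
move=> FF FG Gconv Fs Gns.
have [A [d [d_gt0 sep]]] :=
  wstar_convex_separation FG.2 Gconv (FF.2.1 s Fs) Gns.
pose c := re (s A) + d / 2.
exists (fun H => Fset nK H /\ exists2 h, H h & re (h A) < c).
exists (fun H => Fset nK H /\
  exists2 b, c < b & forall h, H h -> b <= re (h A)).
split; [exact: hyp_open_exists_lt | exact: hyp_open_forall_gt | | |].
- by split=> //; exists s => //; rewrite /c; lra.
- by split=> //; exists (re (s A) + d) => //; rewrite /c; lra.
- by move=> H [_ [h Hh hc]] [_ [b cb Hb]]; have := Hb h Hh; lra.
Qed.

Lemma CF_hausdorff_of_re : CF_hausdorff nK X.
Proof.
move=> F G [FF Fconv] [FG Gconv] FG_neq.
have [/nonsubset[s [Fs Gns]]|/nonsubset[s [Gs Fns]]] :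
    ~ (F `<=` G) \/ ~ (G `<=` F).
  by apply/not_andP => -[FG_sub GF_sub]; apply/FG_neq/seteqP.
- have [U [V [UO VO UF VG UV]]] := hyp_open_separation FF FG Gconv Fs Gns.
  by exists U, V; split=> // H _; exact: UV.
- have [V [U [VO UO VG UF VU]]] := hyp_open_separation FG FF Fconv Gs Fns.
  by exists U, V; split=> // H _ UH VH; exact: VU VH UH.
Qed.

End RealPartSeparation.

Section ComplexRealPart.
Variable R : rcfType.
Implicit Types z : R[i].

Lemma Re_le_normc z : complex.Re z <= complex.Re `|z|.
Proof.
case: z => a b; rewrite normc_def /=; apply: le_trans (ler_norm a) _.
by rewrite -sqrtr_sqr; apply: ler_wsqrtr; rewrite lerDl sqr_ge0.
Qed.

Lemma normc_le_Re_Rei z :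
  complex.Re `|z| <= `|complex.Re z| + `|complex.Re ('i%C * z)|.
Proof.
case: z => a b; rewrite normc_def /= mul0r mul1r sub0r normrN.
rewrite -[leRHS]ger0_norm ?addr_ge0 // -[leRHS]sqrtr_sqr.
apply: ler_wsqrtr; rewrite -[a ^+ 2]real_normK ?num_real //.
rewrite -[b ^+ 2]real_normK ?num_real //.
by have := normr_ge0 a; have := normr_ge0 b; nra.
Qed.

Lemma realC_itv01 (l : R) : 0 <= l <= 1 -> (0 : R[i]) <= (l%:C)%C <= 1.
Proof. by move=> /andP[l0 l1]; rewrite ler0c l0 -[1]/((1%:C)%C) lecR. Qed.

End ComplexRealPart.

Theorem corollary3p11 (R : realType) :
  (forall X : topologicalLmodType R,
     hausdorff_space X -> dual_separates_points X ->
     CF_hausdorff (fun z : R => `|z|) X) /\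
  (forall X : topologicalLmodType R[i],
     hausdorff_space X -> dual_separates_points X ->
     CF_hausdorff (fun z : R[i] => complex.Re `|z|) X).
Proof.
split=> X _ _.
  apply: (@CF_hausdorff_of_re R R _ id id 0) => // [z|z|z].
  - exact: ler_norm.
  - by rewrite mul0r normr0 addr0.
  - exact: normrN.
apply: (@CF_hausdorff_of_re R R[i] _ (@complex.Re R) (fun r => (r%:C)%C) 'i%C).
- by case=> a b [c d].
- by move=> r [a b]; rewrite /= mul0r subr0.
- exact: Re_le_normc.
- exact: normc_le_Re_Rei.
- by move=> z; rewrite normrN.
- exact: realC_itv01.
Qed.
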